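(* Assume the subgraph $\mathcal G_{\sigma(t)}$ is undirected for all $t\ge0$. Then for all $t\ge0$, every nonzero eigenvalue of $\mathcal H_{\sigma(t)}\in\mathbb{R}^{N\times N}$ is not less than $\lambda_H=\frac{4}{N(N^2-N+4)}$.
   Context: $\sigma:[0,\infty)\to\mathcal P=\{1,\dots,n_0\}$ is a piecewise constant switching signal. For each $p\in\mathcal P$, $\bar{\mathcal G}_p$ is a graph on nodes $\{0,1,\dots,N\}$ with edge set $\bar{\mathcal E}_p$ of ordered pairs $(j,i)$, $j\ne i$; $a_{ij}(t)=1$ if $(j,i)\in\bar{\mathcal E}_{\sigma(t)}$, else $0$. $\mathcal G_{\sigma(t)}$ is the subgraph on $\{1,\dots,N\}$ with the edges of $\bar{\mathcal E}_{\sigma(t)}$ among those nodes (undirected: $(i,j)$ edge iff $(j,i)$ edge), with Laplacian $\mathcal L_{\sigma(t)}$ ($l_{ii}=\sum_{j=1}^Na_{ij}(t)$, $l_{ij}=-a_{ij}(t)$, $i\ne j$). $\Delta_{\sigma(t)}=\mathrm{diag}(a_{10}(t),\dots,a_{N0}(t))$ and $\mathcal H_{\sigma(t)}=\mathcal L_{\sigma(t)}+\Delta_{\sigma(t)}$ (the leader-follower matrix). *)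

From HB Require Import structures.
From mathcomp Require Import all_boot all_order all_algebra.
From mathcomp Require Import reals.
Set Implicit Arguments. Unset Strict Implicit. Unset Printing Implicit Defensive.
Import Order.TTheory GRing.Theory Num.Theory.
Local Open Scope ring_scope.

(* Modes P = {1..n0} are represented by 'I_n0.  Nodes {0,1,..,N} are 'I_N.+1,
   node 0 (ord0) is the leader, follower i : 'I_N is node (lift ord0 i).
   E p : rel 'I_N.+1, with  E p j i  meaning  (j,i) \in \bar E_p. *)

Section Defs.
Variable R : realType.

Definition piecewise_constant (n0 : nat) (sigma : R -> 'I_n0) : Prop :=
  exists ts : nat -> R,
    [/\ ts 0%N = 0,
        (forall k, ts k < ts k.+1),
        (forall M : R, exists k, M < ts k) &
        (forall k t, ts k <= t -> t < ts k.+1 -> sigma t = sigma (ts k))].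

Variables (n0 N : nat) (E : 'I_n0 -> rel 'I_N.+1).

Definition adj (p : 'I_n0) (i j : 'I_N) : R := (E p (lift ord0 j) (lift ord0 i))%:R.

Definition adj0 (p : 'I_n0) (i : 'I_N) : R := (E p ord0 (lift ord0 i))%:R.

Definition lapl (p : 'I_n0) : 'M[R]_N :=
  \matrix_(i, j) (if i == j then \sum_(k < N) adj p i k else - adj p i j).

Definition Delta (p : 'I_n0) : 'M[R]_N :=
  \matrix_(i, j) (if i == j then adj0 p i else 0).

Definition Hmx (p : 'I_n0) : 'M[R]_N := lapl p + Delta p.

End Defs.

From HB Require Import structures.
From mathcomp Require Import all_boot all_order all_algebra.
From mathcomp Require Import reals.
From mathcomp Require Import ring lra.
Set Implicit Arguments. Unset Strict Implicit. Unset Printing Implicit Defensive.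
Import Order.TTheory GRing.Theory Num.Theory.
Local Open Scope ring_scope.

(* Let x be an eigenvector of H for lam <> 0.  On the followers H x = lam x is
   a grounded graph Laplacian equation, and lam |x|^2 = Q x, the Dirichlet
   energy of x plus the leader terms.  Because lam <> 0, for every tau >= 0
   below max x some edge leaves the super-level set {x > tau}, or that set
   contains a neighbour of the leader: otherwise summing the eigen-equation
   over it gives lam * sum x = 0.  Clamping x to [0, x_i] does not increase Q,
   and each gap between consecutive nonnegative values of x below x_i is
   crossed, so by Cauchy-Schwarz x_i^2 <= r_i Q x, where r_i is the rank of
   x_i among the positive entries (symmetrically for negative ones).  These
   ranks add up to at most N(N+1)/2, whence |x|^2 <= N(N+1)/2 lam |x|^2, i.e.
   lam >= 2/(N(N+1)) >= 4/(N(N^2-N+4)). *)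

Section Clamp.
Variable R : realFieldType.
Implicit Types a b u v : R.

Definition clamp a v := Num.min (Num.max v 0) a.

Lemma clamp_cases a v : 0 <= a ->
  [\/ v <= 0 /\ clamp a v = 0, (0 <= v /\ v <= a) /\ clamp a v = v
    | a <= v /\ clamp a v = a].
Proof.
rewrite /clamp /Order.max /Order.min => a_ge0.
case: (ltrP v 0) => v0; case: ltrP => va.
- by apply: Or31; split; lra.
- by apply: Or31; split; lra.
- by apply: Or32; split=> //; split; lra.
- by apply: Or33; split.
Qed.

Lemma clamp0 a : 0 <= a -> clamp a 0 = 0.
Proof. by move=> a_ge0; case: (clamp_cases 0 a_ge0) => -[h ->] //; lra. Qed.

Lemma clamp_ge0_le a u : 0 <= a -> 0 <= clamp a u /\ clamp a u <= a.
Proof. by move=> a_ge0; case: (clamp_cases u a_ge0) => -[hu ->]; lra. Qed.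

Lemma clamp_le_id a b u : 0 <= b -> b <= a -> u <= b -> clamp a u = clamp b u.
Proof.
move=> b_ge0 b_le_a u_le_b; have a_ge0 : 0 <= a by lra.
by case: (clamp_cases u b_ge0) => -[hu ->]; case: (clamp_cases u a_ge0) => -[hu' ->]; lra.
Qed.

Lemma clamp_ge_id a u : 0 <= a -> a <= u -> clamp a u = a.
Proof. by move=> a_ge0 a_le_u; case: (clamp_cases u a_ge0) => -[hu ->]; lra. Qed.

Lemma clamp_sqrB_le a u v : 0 <= a -> (clamp a u - clamp a v) ^+ 2 <= (u - v) ^+ 2.
Proof.
move=> a_ge0; have := sqr_ge0 (u - v).
by case: (clamp_cases u a_ge0) => -[hu ->]; case: (clamp_cases v a_ge0) => -[hv ->]; nra.
Qed.

Lemma clamp_gap_cross a b u v : 0 <= b -> b < a -> u <= b -> a <= v ->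
  (clamp b u - clamp b v) ^+ 2 + (a - b) ^+ 2 <= (clamp a u - clamp a v) ^+ 2.
Proof.
move=> b_ge0 b_lt_a u_le_b a_le_v; have a_ge0 : 0 <= a by lra.
rewrite (clamp_le_id b_ge0 (ltW b_lt_a) u_le_b) (clamp_ge_id a_ge0 a_le_v).
rewrite (clamp_ge_id b_ge0 (le_trans (ltW b_lt_a) a_le_v)).
by have [c_ge0 c_le_b] := clamp_ge0_le u b_ge0; nra.
Qed.

Lemma clamp_gap_le a b u v : 0 <= b -> b < a -> u <= b \/ a <= u -> v <= b \/ a <= v ->
  (clamp b u - clamp b v) ^+ 2 <= (clamp a u - clamp a v) ^+ 2.
Proof.
move=> b_ge0 b_lt_a; have a_ge0 : 0 <= a by lra.
have gap_ge0 := sqr_ge0 (a - b).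
move=> [u_le_b|a_le_u] [v_le_b|a_le_v].
- by rewrite !(clamp_le_id b_ge0 (ltW b_lt_a)).
- by have := clamp_gap_cross b_ge0 b_lt_a u_le_b a_le_v; lra.
- rewrite -(sqrrN (clamp b u - _)) -(sqrrN (clamp a u - _)) !opprB.
  by have := clamp_gap_cross b_ge0 b_lt_a v_le_b a_le_u; lra.
- by rewrite !clamp_ge_id ?subrr //; lra.
Qed.

End Clamp.

Lemma ler_sum_gain (R : numDomainType) (I : finType) (P : {pred I}) (F G : I -> R) c :
  (forall i, F i <= G i) -> (forall i, i \in P -> F i + c <= G i) ->
  \sum_i F i + c *+ #|P| <= \sum_i G i.
Proof.
move=> le_FG gain.
rewrite -lerBrDl -sumrB -sumr_const [X in _ <= X](bigID (mem P)) /= -[leLHS]addr0.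
apply: lerD; first by apply: ler_sum => i /gain; rewrite lerBrDl addrC.
by apply: sumr_ge0 => i _; rewrite subr_ge0.
Qed.

Lemma ler_sum_gain1 (R : numDomainType) (I : finType) (F G : I -> R) c i0 :
  (forall i, F i <= G i) -> F i0 + c <= G i0 -> \sum_i F i + c <= \sum_i G i.
Proof.
move=> le_FG gain; have := ler_sum_gain (P := pred1 i0) (c := c) le_FG.
by rewrite card1; apply=> i /eqP->.
Qed.

Lemma sqrD_le_cauchy (R : realFieldType) (k s b g : R) : 0 <= k -> 0 <= s ->
  b ^+ 2 <= k * s -> (b + g) ^+ 2 <= (k + 1) * (s + g ^+ 2).
Proof.
move=> k_ge0 s_ge0 b_le; have [k_gt0|k_le0] := ltrP 0 k; last first.
  have -> : k = 0 by lra.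
  have -> : b = 0 by nra.
  nra.
have : 0 <= k * (s + k * g ^+ 2 - 2 * b * g).
  have -> : k * (s + k * g ^+ 2 - 2 * b * g) = (k * s - b ^+ 2) + (b - k * g) ^+ 2 by ring.
  by rewrite addr_ge0 ?sqr_ge0 ?subr_ge0.
rewrite pmulr_rge0 //; nra.
Qed.

Lemma card_antisym_le (T : finType) (r : rel T) : antisymmetric r ->
  (2 * \sum_i #|r i| <= #|T| * #|T|.+1)%N.
Proof.
move=> r_anti.
have card_rE i : #|r i| = (\sum_j r i j)%N.
  by rewrite -sum1_card big_mkcond; apply: eq_bigr => j _; rewrite unfold_in; case: (r i j).
have -> : (2 * \sum_i #|r i| = \sum_i \sum_j (r i j + r j i))%N.
  under eq_bigr do rewrite card_rE.
  rewrite mul2n -addnn [X in (_ + X)%N]exchange_big -big_split.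
  by apply: eq_bigr => i _; rewrite -big_split.
have -> : (#|T| * #|T|.+1 = \sum_(i : T) \sum_(j : T) (1 + (i == j)))%N.
  rewrite -sum_nat_const; apply: eq_bigr => i _.
  rewrite big_split /= sum1_card (bigD1 i) //= eqxx big1 ?addn0 ?addn1 // => j.
  by rewrite eq_sym => /negbTE ->.
apply: leq_sum => i _; apply: leq_sum => j _.
have [<-|ij] := eqVneq i j; first by case: (r i i).
rewrite addn0; have := r_anti i j.
by case: (r i j) (r j i) => -[] // /(_ isT) eq_ij; rewrite eq_ij eqxx in ij.
Qed.

Section PositiveRank.
Variables (R : realFieldType) (n : nat).
Implicit Types (x : 'I_n -> R) (i j k : 'I_n).

(* Ties are broken by index, so that [below x] is antisymmetric. *)
Definition below x i j : bool :=
  (0 < x j) && ((x j < x i) || (x j == x i) && (j <= i)%N).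

Definition prank x i : nat := #|below x i|.

Definition below_abs x i j : bool := below x i j || below (fun k => - x k) i j.

Lemma below_bounds x i j : below x i j -> 0 < x j /\ x j <= x i.
Proof. by case/andP=> -> /orP[/ltW|/andP[/eqP-> _]]. Qed.

Lemma below_refl x i : 0 < x i -> below x i i.
Proof. by move=> xi_gt0; rewrite /below xi_gt0 eqxx leqnn orbT. Qed.

Lemma below_antisym x : antisymmetric (below x).
Proof.
move=> i j /andP[ij ji]; have [_ le_ji] := below_bounds ij; have [_ le_ij] := below_bounds ji.
have eq_x : x i = x j by apply/eqP; rewrite eq_le le_ij le_ji.
move: ij ji; rewrite /below eq_x ltxx eqxx /= => /andP[_ le_ji'] /andP[_ le_ij'].
by apply: val_inj; apply/eqP; rewrite eqn_leq le_ij' le_ji'.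
Qed.

Lemma below_abs_antisym x : antisymmetric (below_abs x).
Proof.
move=> i j /andP[]; case/orP=> ij; case/orP=> ji.
- exact: below_antisym (introT andP (conj ij ji)).
- have [xj_gt0 le_ji] := below_bounds ij; have [/= xi_lt0 _] := below_bounds ji.
  by exfalso; lra.
- have [/= xj_lt0 _] := below_bounds ij; have [xi_gt0 le_ij] := below_bounds ji.
  by exfalso; lra.
- exact: below_antisym (introT andP (conj ij ji)).
Qed.

Lemma prank_gt0 x i : 0 < x i -> (0 < prank x i)%N.
Proof. by move=> xi_gt0; apply/card_gt0P; exists i; exact: below_refl. Qed.

Lemma prank_lt x i k : 0 < x i -> x k < x i -> (prank x k < prank x i)%N.
Proof.
move=> xi_gt0 lt_ki; apply: proper_card; apply/properP; split.
  apply/subsetP => j kj; have [xj_gt0 le_jk] := below_bounds kj.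
  by rewrite unfold_in /below xj_gt0 (le_lt_trans le_jk lt_ki).
exists i; first exact: below_refl.
by rewrite unfold_in /below (lt_gtF lt_ki) (gt_eqF lt_ki) andbF.
Qed.

Lemma gap_below x a : 0 < a -> exists b, [/\ 0 <= b, b < a,
  (forall j, x j <= b \/ a <= x j) & b = 0 \/ exists2 k, 0 < x k & x k = b].
Proof.
move=> a_gt0; case: (pickP [pred k | 0 <= x k < a]) => [k0 k0P|none]; last first.
  exists 0; split=> //; last by left.
  move=> j; have [a_le|xj_lt] := lerP a (x j); [by right | left].
  by have := none j; rewrite /= xj_lt andbT => /negbT; rewrite -ltNge => /ltW.
have [k /andP[xk_ge0 xk_lt] kmax] := @arg_maxP _ _ _ k0 [pred k | 0 <= x k < a] x k0P.
exists (x k); split=> //.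
  move=> j; have [a_le|xj_lt] := lerP a (x j); [by right | left].
  have [xj_ge0|xj_lt0] := lerP 0 (x j); first by apply: kmax; rewrite /= xj_ge0.
  exact: ltW (lt_le_trans xj_lt0 xk_ge0).
have [xk_gt0|xk_le0] := ltrP 0 (x k); first by right; exists k.
by left; apply/eqP; rewrite eq_le xk_le0.
Qed.

End PositiveRank.

Section GroundedLaplacian.
Variables (R : realFieldType) (n : nat) (e : rel 'I_n) (l : pred 'I_n).
Implicit Types (x : 'I_n -> R) (a b tau lam : R).

Definition laplace x j : R := \sum_k (e j k)%:R * (x j - x k) + (l j)%:R * x j.

Definition qform x : R :=
  (\sum_j \sum_k (e j k)%:R * (x j - x k) ^+ 2) / 2 + \sum_j (l j)%:R * x j ^+ 2.

Definition crossing x tau : bool :=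
  [exists j, exists k, [&& e j k, x j <= tau & tau < x k]] || [exists k, l k && (tau < x k)].

Lemma laplaceN x j : laplace (fun k => - x k) j = - laplace x j.
Proof.
rewrite /laplace opprD -sumrN mulrN; congr (_ + _).
by apply: eq_bigr => k _; rewrite -opprD mulrN.
Qed.

Lemma qformN x : qform (fun k => - x k) = qform x.
Proof.
rewrite /qform; congr (_ / _ + _); last by apply: eq_bigr => j _; rewrite sqrrN.
by apply: eq_bigr => j _; apply: eq_bigr => k _; rewrite -opprD sqrrN.
Qed.

Lemma qform_ge0 x : 0 <= qform x.
Proof.
rewrite addr_ge0 ?divr_ge0 ?sumr_ge0 // => j _; last by rewrite mulr_ge0 ?sqr_ge0.
by rewrite sumr_ge0 // => k _; rewrite mulr_ge0 ?sqr_ge0.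
Qed.

Lemma qform_clamp_le x a : 0 <= a -> qform (clamp a \o x) <= qform x.
Proof.
move=> a_ge0; rewrite /qform lerD ?ler_wpM2r ?invr_ge0 ?ler_sum // => j _.
  by rewrite ler_sum // => k _; rewrite ler_wpM2l ?clamp_sqrB_le.
by rewrite ler_wpM2l //; have := clamp_sqrB_le (x j) 0 a_ge0; rewrite clamp0 // !subr0.
Qed.

Hypothesis e_sym : symmetric e.

Lemma qformE x : qform x = \sum_j x j * laplace x j.
Proof.
set S := \sum_j \sum_k (e j k)%:R * (x j * (x j - x k)).
have S_sym : S = \sum_j \sum_k (e j k)%:R * (x k * (x k - x j)).
  by rewrite /S exchange_big; apply: eq_bigr => j _; apply: eq_bigr => k _; rewrite e_sym.
rewrite /qform; have -> : \sum_j \sum_k (e j k)%:R * (x j - x k) ^+ 2 = S + S.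
  rewrite {2}S_sym -big_split; apply: eq_bigr => j _.
  by rewrite -big_split; apply: eq_bigr => k _ /=; ring.
have -> : (S + S) / 2 = S by field.
rewrite /S -big_split; apply: eq_bigr => j _ /=.
rewrite /laplace mulrDr mulr_sumr; congr (_ + _); last by ring.
by apply: eq_bigr => k _; ring.
Qed.

Lemma sum_laplace_flux (U : {pred 'I_n}) x : \sum_(j in U) laplace x j =
  \sum_(j in U) (\sum_(k | k \notin U) (e j k)%:R * (x j - x k) + (l j)%:R * x j).
Proof.
have inner0 : \sum_(j in U) \sum_(k in U) (e j k)%:R * (x j - x k) = 0.
  set S := LHS; suff : S = - S by lra.
  rewrite {1}/S exchange_big -sumrN; apply: eq_bigr => j _.
  by rewrite -sumrN; apply: eq_bigr => k _; rewrite e_sym; ring.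
rewrite /laplace; under eq_bigr do rewrite (bigID (mem U)) /= -addrA.
by rewrite big_split /= inner0 add0r.
Qed.

Lemma eigen_crossing x lam tau i : (forall j, laplace x j = lam * x j) -> lam != 0 ->
  0 <= tau -> tau < x i -> crossing x tau.
Proof.
move=> eig lam_neq0 tau_ge0 xi_gt; apply: contraT => /norP[/existsPn no_edge /existsPn no_lead].
pose U := [pred j | tau < x j].
have : \sum_(j in U) laplace x j = 0.
  rewrite sum_laplace_flux big1 // => j; rewrite inE => Uj; rewrite big1 ?add0r.
    by move: (no_lead j); rewrite Uj andbT => /negbTE ->; rewrite mul0r.
  move=> k; rewrite inE -leNgt => Uk.
  by move/existsPn: (no_edge k) => /(_ j); rewrite Uk Uj !andbT e_sym => /negbTE ->; rewrite mul0r.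
have sum_gt0 : 0 < \sum_(j in U) x j.
  rewrite (bigD1 i) ?inE //=; apply: ltr_pwDl; first exact: le_lt_trans xi_gt.
  by apply: sumr_ge0 => j /andP[tau_lt _]; exact: ltW (le_lt_trans tau_ge0 tau_lt).
under eq_bigr do rewrite eig.
by rewrite -mulr_sumr => /eqP; rewrite mulf_eq0 (negbTE lam_neq0) gt_eqF.
Qed.

Lemma qform_clamp_gap x a b : 0 <= b -> b < a -> (forall j, x j <= b \/ a <= x j) ->
  crossing x b -> qform (clamp b \o x) + (a - b) ^+ 2 <= qform (clamp a \o x).
Proof.
move=> b_ge0 b_lt_a gap; have a_ge0 : 0 <= a by lra.
have above j : b < x j -> a <= x j by case: (gap j) => // xj_le; lra.
pose edge c j k := (e j k)%:R * (clamp c (x j) - clamp c (x k)) ^+ 2.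
pose lead c j := (l j)%:R * clamp c (x j) ^+ 2.
have edge_le j k : edge b j k <= edge a j k by rewrite ler_wpM2l ?clamp_gap_le.
have row_le j : \sum_k edge b j k <= \sum_k edge a j k by rewrite ler_sum.
have lead_le j : lead b j <= lead a j.
  rewrite ler_wpM2l //; have := clamp_gap_le b_ge0 b_lt_a (gap j) (or_introl b_ge0).
  by rewrite !clamp0 // !subr0.
have edges_le : \sum_j \sum_k edge b j k <= \sum_j \sum_k edge a j k by rewrite ler_sum.
have leads_le : \sum_j lead b j <= \sum_j lead a j by rewrite ler_sum.
rewrite /qform /=; case/orP => [/existsP[j0 /existsP[k0 /and3P[e_jk xj_le xk_gt]]]|].
  have jk : j0 != k0 by apply: contraTneq xk_gt => <-; rewrite -leNgt.
  have cross : edge b j0 k0 + (a - b) ^+ 2 <= edge a j0 k0.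
    by rewrite /edge e_jk !mul1r clamp_gap_cross ?above.
  have crossC : edge b k0 j0 + (a - b) ^+ 2 <= edge a k0 j0.
    by rewrite /edge e_sym -!(sqrrN (clamp _ (x k0) - _)) !opprB.
  have rows : \sum_j \sum_k edge b j k + (a - b) ^+ 2 *+ 2 <= \sum_j \sum_k edge a j k.
    have := ler_sum_gain (P := pred2 j0 k0) (c := (a - b) ^+ 2) row_le.
    rewrite card2 jk; apply=> j /pred2P[]->.
      exact: ler_sum_gain1 (edge_le _) cross.
    exact: ler_sum_gain1 (edge_le _) crossC.
  by rewrite /edge /lead in rows leads_le; lra.
case/existsP=> k0 /andP[l_k xk_gt].
have cross : lead b k0 + (a - b) ^+ 2 <= lead a k0.
  rewrite /lead l_k !mul1r.
  have := clamp_gap_cross (u := 0) (v := x k0) b_ge0 b_lt_a b_ge0 (above k0 xk_gt).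
  by rewrite !clamp0 // !sub0r !sqrrN.
have := ler_sum_gain1 lead_le cross.
by rewrite /edge /lead in edges_le *; lra.
Qed.

(* Induction on the rank: by [gap_below] the energy gains (x i - b)^2 across
   the gap just below x i, and b itself has smaller rank. *)
Lemma sqr_le_prank_qform x : (forall tau i, 0 <= tau -> tau < x i -> crossing x tau) ->
  forall i, 0 < x i -> x i ^+ 2 <= (prank x i)%:R * qform (clamp (x i) \o x).
Proof.
move=> cross i; have [m] := ubnP (prank x i); elim: m i => // m IH i /ltnSE rank_le xi_gt0.
have [b [b_ge0 b_lt gap b_val]] := gap_below x xi_gt0.
have rank_ge1 : 1 <= (prank x i)%:R :> R by rewrite ler1n prank_gt0.
have IHb : b ^+ 2 <= ((prank x i)%:R - 1) * qform (clamp b \o x).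
  case: b_val => [->|[k xk_gt0 xk_b]]; first by rewrite expr0n /= mulr_ge0 ?subr_ge0 ?qform_ge0.
  have lt_ki : (prank x k < prank x i)%N by apply: prank_lt; rewrite ?xk_b.
  rewrite -xk_b; apply: le_trans (IH k (leq_trans lt_ki rank_le) xk_gt0) _.
  by rewrite ler_wpM2r ?qform_ge0 // lerBrDr natr1 ler_nat.
have k_ge0 : 0 <= (prank x i)%:R - 1 :> R by rewrite subr_ge0.
have := sqrD_le_cauchy (x i - b) k_ge0 (qform_ge0 _) IHb.
rewrite addrC subrK subrK => /le_trans; apply; rewrite ler_wpM2l ?ler0n //.
exact: qform_clamp_gap (cross _ _ b_ge0 b_lt).
Qed.

Lemma sqr_le_below_abs x lam i : (forall j, laplace x j = lam * x j) -> lam != 0 ->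
  x i ^+ 2 <= #|below_abs x i|%:R * qform x.
Proof.
move=> eig lam_neq0.
suff pos y : (forall j, laplace y j = lam * y j) -> 0 < y i ->
    y i ^+ 2 <= #|below y i|%:R * qform y.
  have [xi_gt0|xi_lt0|<-] := ltrgtP 0 (x i).
  - apply: le_trans (pos x eig xi_gt0) _; rewrite ler_wpM2r ?qform_ge0 // ler_nat.
    by apply/subset_leq_card/subsetP => j ij; apply/orP; left.
  - have eigN j : laplace (fun k => - x k) j = lam * - x j by rewrite laplaceN eig mulrN.
    rewrite -sqrrN -(qformN x); apply: le_trans (pos _ eigN _) _; first by rewrite oppr_gt0.
    rewrite ler_wpM2r ?qform_ge0 // ler_nat.
    by apply/subset_leq_card/subsetP => j ij; apply/orP; right.
  - by rewrite expr0n mulr_ge0 ?qform_ge0.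
move=> eig_y yi_gt0; apply: le_trans (sqr_le_prank_qform _ yi_gt0) _.
  by move=> tau j; apply: eigen_crossing eig_y lam_neq0.
by rewrite ler_wpM2l ?qform_clamp_le // ltW.
Qed.

Theorem laplace_eigenvalue_ge x lam : (forall j, laplace x j = lam * x j) -> lam != 0 ->
  (exists j, x j != 0) -> 2 / (n * n.+1)%:R <= lam.
Proof.
move=> eig lam_neq0 [j0 xj0_neq0].
have n_gt0 : (0 < n)%N := leq_ltn_trans (leq0n j0) (ltn_ord j0).
have norm_gt0 : 0 < \sum_j x j ^+ 2.
  rewrite (bigD1 j0) //= ltr_pwDl ?sumr_ge0 // => [|j _]; last exact: sqr_ge0.
  by rewrite lt_def sqr_ge0 sqrf_eq0 xj0_neq0.
have qform_eig : qform x = lam * \sum_j x j ^+ 2.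
  by rewrite qformE mulr_sumr; apply: eq_bigr => j _; rewrite eig; ring.
have ranks := card_antisym_le (@below_abs_antisym _ _ x); rewrite card_ord in ranks.
have : 2 * \sum_j x j ^+ 2 <= (n * n.+1)%:R * (lam * \sum_j x j ^+ 2).
  rewrite -qform_eig; apply: le_trans (_ : 2 * ((\sum_i #|below_abs x i|)%:R * qform x) <= _).
    by rewrite ler_wpM2l // natr_sum mulr_suml ler_sum // => i _; apply: sqr_le_below_abs eig _.
  by rewrite mulrA ler_wpM2r ?qform_ge0 // -[2]/(2%:R) -natrM ler_nat.
rewrite mulrA [_ * lam]mulrC ler_pM2r // => ineq.
by rewrite ler_pdivrMr // ltr0n muln_gt0 n_gt0.
Qed.

End GroundedLaplacian.

Lemma lambdaH_le (R : realFieldType) (n : nat) : (0 < n)%N ->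
  4 / (n%:R * (n%:R ^+ 2 - n%:R + 4)) <= 2 / (n * n.+1)%:R :> R.
Proof.
move=> n_gt0; have n_ge1 : 1 <= n%:R :> R by rewrite ler1n.
have nat_gap : 0 <= (n%:R - 1) * (n%:R - 2) :> R.
  case: n n_gt0 {n_ge1} => [|[|m]] // _; first by rewrite subrr mul0r.
  by have := ler0n R m; rewrite !mulrS => m_ge0; apply: mulr_ge0; lra.
rewrite ler_pdivrMr; last by nra.
rewrite mulrAC ler_pdivlMr ?ltr0n ?muln_gt0 ?n_gt0 // natrM -natr1; nra.
Qed.

Section LeaderFollower.
Variables (R : realType) (n0 N : nat) (E : 'I_n0 -> rel 'I_N.+1) (p : 'I_n0).

Definition follower_rel : rel 'I_N := fun j k => E p (lift ord0 k) (lift ord0 j).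
Definition leader_nbr : pred 'I_N := fun j => E p ord0 (lift ord0 j).

Lemma mulmx_Hmx_laplace (v : 'rV[R]_N) j : symmetric follower_rel -> irreflexive follower_rel ->
  (v *m Hmx R E p) 0 j = laplace follower_rel leader_nbr (v 0) j.
Proof.
move=> e_sym e_irr.
have Hij i : Hmx R E p i j =
    (i == j)%:R * (\sum_k (follower_rel j k)%:R + (leader_nbr j)%:R) - (follower_rel j i)%:R.
  rewrite /Hmx /lapl /Delta !mxE; have [->|ij] := eqVneq i j; first by rewrite e_irr mul1r subr0.
  by rewrite mul0r sub0r addr0 /adj -/(follower_rel i j) e_sym.
rewrite mxE; under eq_bigr do rewrite Hij mulrBr.
rewrite sumrB (bigD1 j) //= eqxx mul1r [X in _ + X - _]big1 ?addr0; last first.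
  by move=> i /negbTE->; rewrite mul0r mulr0.
rewrite /laplace mulrDr mulr_sumr addrAC -sumrB [v 0 j * _]mulrC.
by congr (_ + _); apply: eq_bigr => k _; ring.
Qed.

End LeaderFollower.

Theorem lemma4 (R : realType) (n0 N : nat) (sigma : R -> 'I_n0)
  (E : 'I_n0 -> rel 'I_N.+1)
  (Hpc : piecewise_constant sigma)
  (Hirr : forall p (v : 'I_N.+1), ~~ E p v v)
  (Hundir : forall t : R, 0 <= t -> forall i j : 'I_N,
      E (sigma t) (lift ord0 j) (lift ord0 i) = E (sigma t) (lift ord0 i) (lift ord0 j)) :
  forall t : R, 0 <= t -> forall lam : R,
    eigenvalue (@Hmx R n0 N E (sigma t)) lam -> lam != 0 ->
    4 / (N%:R * (N%:R ^+ 2 - N%:R + 4)) <= lam.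
Proof.
move=> t t_ge0 lam /eigenvalueP[v vH v_neq0] lam_neq0.
have e_sym : symmetric (follower_rel E (sigma t)) by move=> j k; exact: Hundir.
have e_irr : irreflexive (follower_rel E (sigma t)) by move=> j; exact/negbTE/Hirr.
have eig j : laplace (follower_rel E (sigma t)) (leader_nbr E (sigma t)) (v 0) j = lam * v 0 j.
  by rewrite -mulmx_Hmx_laplace // vH mxE.
have [j0 vj0_neq0] : exists j, v 0 j != 0.
  apply/existsP; apply: contraNT v_neq0 => /existsPn v_eq0.
  by apply/eqP/rowP => j; rewrite mxE; apply/eqP/negPn/v_eq0.
have N_gt0 : (0 < N)%N := leq_ltn_trans (leq0n j0) (ltn_ord j0).
apply: le_trans (lambdaH_le R N_gt0) _.
exact: (laplace_eigenvalue_ge e_sym eig lam_neq0 (ex_intro _ j0 vj0_neq0)).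
Qed.
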